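(* Let a function $K^\varepsilon$ be of order $\zeta \leq 0$. Then for every $\kappa \in [0,1]$, $t \in \mathbf{R}$ and $x_1, x_2 \in \Lambda_\varepsilon^d$ one has \begin{equ} |K^\varepsilon(t, x_1) - K^\varepsilon(t, x_2)| \lesssim |x_1 - x_2|^\kappa \Bigl((\|(t, x_1)\|_{\mathfrak{s}}\vee\varepsilon)^{\zeta - \kappa} + (\|(t, x_2)\|_{\mathfrak{s}}\vee\varepsilon)^{\zeta - \kappa} \Bigr) |\!|\!| K^\varepsilon |\!|\!|_{\zeta; 1}\;. \end{equ}
   Context: Fix a scaling $\mathfrak{s}=(\mathfrak{s}_0,1,\ldots,1)$ of $\mathbf{R}^{d+1}$ with $\mathfrak{s}_0\ge1$, and $\varepsilon=2^{-N}$, $N\in\mathbf{N}$, with grid $\Lambda^d_\varepsilon=(\varepsilon\mathbf{Z})^d$. For $z=(t,x)$ let $\|z\|_{\mathfrak{s}}=|t|^{1/\mathfrak{s}_0}\vee|x|$. Functions $K^\varepsilon$ on $\mathbf{R}\times\Lambda^d_\varepsilon$ are supported in a ball centered at the origin and may fail to be differentiable in time only on $P_0=\{(0,x):x\in\Lambda^d_\varepsilon\}$. Let $D_{i,\varepsilon}K(t,x)=\varepsilon^{-1}(K(t,x+\varepsilon e_i)-K(t,x))$, $D^k_\varepsilon=D_t^{k_0}D^{k_1}_{1,\varepsilon}\cdots D^{k_d}_{d,\varepsilon}$, $|k|_{\mathfrak{s}}=\mathfrak{s}_0k_0+\sum_{i\ge1}k_i$, and $|\!|\!| K^\varepsilon|\!|\!|_{\zeta;m}=\max_{|k|_{\mathfrak{s}}\le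 m}\sup_{z\notin P_0}\frac{|D^k_\varepsilon K^\varepsilon(z)|}{(\|z\|_{\mathfrak{s}}\vee\varepsilon)^{(\zeta-|k|_{\mathfrak{s}})\wedge0}}$. $K^\varepsilon$ (a sequence indexed by $\varepsilon=2^{-N}$) is of order $\zeta$ if this quantity is bounded uniformly in $\varepsilon$; the proportionality constant is independent of $\varepsilon$. *)

From HB Require Import structures.
From mathcomp Require Import all_boot all_order all_algebra.
From mathcomp Require Import all_classical all_reals all_analysis.
Set Implicit Arguments. Unset Strict Implicit. Unset Printing Implicit Defensive.
Import Order.TTheory GRing.Theory Num.Theory.
Import numFieldNormedType.Exports.
Local Open Scope classical_set_scope.
Local Open Scope ring_scope.

(* Functions on R x Lambda^d_eps are represented as  K : R -> ('I_d -> int) -> R,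
   where the grid point  x in (eps Z)^d  is encoded by its integer coordinates
   k : 'I_d -> int  (x = eps * k). *)

Section Defs.
Variable R : realType.

Definition epsN (N : nat) : R := 2%:R ^- N.

Definition gridnorm d (eps : R) (k : 'I_d -> int) : R :=
  Num.sqrt (\sum_(i < d) (eps * (k i)%:~R) ^+ 2).

Definition snorm d (s0 : R) (eps : R) (t : R) (k : 'I_d -> int) : R :=
  Num.max (`|t| `^ (s0^-1)) (gridnorm eps k).

Definition Ddiff d (eps : R) (i : 'I_d) (K : R -> ('I_d -> int) -> R)
  : R -> ('I_d -> int) -> R :=
  fun t k => eps^-1 * (K t (fun j => k j + (j == i)%:Z) - K t k).

Definition Dtime d (K : R -> ('I_d -> int) -> R) : R -> ('I_d -> int) -> R :=
  fun t k => derive1 (fun s => K s k) t.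

Definition Dk d (eps : R) (k0 : nat) (kx : 'I_d -> nat)
  (K : R -> ('I_d -> int) -> R) : R -> ('I_d -> int) -> R :=
  iter k0 (@Dtime d)
    (foldr (fun i g => iter (kx i) (Ddiff eps i) g) K (enum 'I_d)).

Definition msize d (s0 : R) (k0 : nat) (kx : 'I_d -> nat) : R :=
  s0 * k0%:R + \sum_(i < d) (kx i)%:R.

Definition tnorm d (s0 eps zeta m : R) (K : R -> ('I_d -> int) -> R) : \bar R :=
  ereal_sup [set v : \bar R | exists k0 kx t k,
    [/\ t != 0, msize s0 k0 kx <= m &
        v = (`|Dk eps k0 kx K t k|
             / (Num.max (snorm s0 eps t k) eps) `^ (Num.min (zeta - msize s0 k0 kx) 0))%:E]].

Definition admissible d (s0 eps : R) (K : R -> ('I_d -> int) -> R) : Prop :=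
  [/\ (exists r : R, forall t k, r < snorm s0 eps t k -> K t k = 0),
      (forall t k, t != 0 -> derivable (fun s => K s k) t 1) &
      (forall k, K t k @[t --> 0^'+] --> K 0 k) \/
      (forall k, K t k @[t --> 0^'-] --> K 0 k)].

Definition of_order d (s0 zeta m : R) (K : nat -> R -> ('I_d -> int) -> R) : Prop :=
  exists M : R, forall N, (tnorm s0 (epsN N) zeta m (K N) <= M%:E)%E.

End Defs.
Arguments epsN {R}.

From HB Require Import structures.
From mathcomp Require Import all_boot all_order all_algebra.
From mathcomp Require Import all_classical all_reals all_analysis.
From mathcomp Require Import ring lra zify.

Set Implicit Arguments.
Unset Strict Implicit.
Unset Printing Implicit Defensive.

(* At a fixed time t <> 0, write r(x) = ||(t, x)||_s \/ eps.  The order-zeta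
   bound gives |K(x)| <= T r(x)^zeta and |D_i K(x)| <= T r(x)^(zeta - 1).  If
   r(x1) <= 2 d |x1 - x2|, then also r(x2) <~ |x1 - x2|, and the triangle
   inequality together with r^zeta <= r^(zeta - kappa) (c |x1 - x2|)^kappa
   suffices.  Otherwise r stays above r(x1) / 2d on the box spanned by x1 and
   x2, and summing the bound on D_i K along a monotone lattice path of
   <= d |x1 - x2| / eps steps gives
   |x1 - x2| r(x1)^(zeta - 1) <= |x1 - x2|^kappa r(x1)^(zeta - kappa).
   At t = 0 one passes to the limit in time: for |t| <= eps^s0 the weight
   r does not depend on t. *)

Import Order.TTheory GRing.Theory Num.Theory.
Import numFieldNormedType.Exports.
Local Open Scope classical_set_scope.
Local Open Scope ring_scope.

Lemma sum_sqr_le_sqr_sum_norm (R : realDomainType) (n : nat) (f : 'I_n -> R) :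
  \sum_(i < n) f i ^+ 2 <= (\sum_(i < n) `|f i|) ^+ 2.
Proof.
elim: n f => [|n IHn] f; first by rewrite !big_ord0 expr0n.
rewrite !big_ord_recr /= -real_normK ?num_real //.
have := IHn (fun i => f (widen_ord (leqnSn n) i)).
have : 0 <= \sum_(i < n) `|f (widen_ord (leqnSn n) i)| by exact: sumr_ge0.
have := normr_ge0 (f ord_max); nra.
Qed.

Lemma sqrt_sum_sqr_le_sum_norm (R : rcfType) (n : nat) (f : 'I_n -> R) :
  Num.sqrt (\sum_(i < n) f i ^+ 2) <= \sum_(i < n) `|f i|.
Proof.
rewrite -(ger0_norm (sumr_ge0 _ (fun i _ => normr_ge0 (f i)))) -sqrtr_sqr.
exact/ler_wsqrtr/sum_sqr_le_sqr_sum_norm.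
Qed.

Lemma le0_ger_powR (R : realType) (a b p : R) :
  0 < a -> a <= b -> p <= 0 -> b `^ p <= a `^ p.
Proof.
move=> a_gt0 ab p_le0; have b_gt0 : 0 < b by exact: lt_le_trans ab.
rewrite -[p]opprK (powRN b) (powRN a) lef_pV2 ?posrE ?powR_gt0 //.
by apply: (ge0_ler_powR (_ : 0 <= - p)); rewrite ?oppr_ge0 // nnegrE ltW.
Qed.

Section GridNorm.
Variables (R : realType) (d : nat) (eps : R).
Implicit Types x z : 'I_d -> int.

Lemma gridnorm_ge0 x : 0 <= gridnorm eps x.
Proof. exact: sqrtr_ge0. Qed.

Lemma gridnorm_coord_le x i : `|eps * (x i)%:~R| <= gridnorm eps x.
Proof.
rewrite /gridnorm -sqrtr_sqr ler_wsqrtr // (bigD1 i) //= lerDl.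
by apply: sumr_ge0 => j _; exact: sqr_ge0.
Qed.

Lemma gridnorm_le_shift x z D :
  (forall i, `|eps * (x i - z i)%:~R| <= D) ->
  gridnorm eps x <= d%:R * (gridnorm eps z + D).
Proof.
move=> xz_le.
apply: le_trans (sqrt_sum_sqr_le_sum_norm (fun i => eps * (x i)%:~R)) _.
apply: (le_trans (y := \sum_(i < d) (gridnorm eps z + D))); last first.
  by rewrite sumr_const card_ord mulr_natl.
apply: ler_sum => i _.
have -> : eps * (x i)%:~R = eps * (z i)%:~R + eps * (x i - z i)%:~R.
  by rewrite intrB; ring.
exact: le_trans (ler_normD _ _) (lerD (gridnorm_coord_le z i) (xz_le i)).
Qed.

End GridNorm.

Lemma max_max_small (R : realDomainType) (a a' g eps : R) : a <= eps -> a' <= eps ->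
  Num.max (Num.max a g) eps = Num.max (Num.max a' g) eps.
Proof.
move=> ha ha'; rewrite -!maxA !(@max_r _ _ _ (Num.max g eps)) //.
  by rewrite le_max ha' orbT.
by rewrite le_max ha orbT.
Qed.

Section ParabolicNorm.
Variables (R : realType) (d : nat) (s0 eps : R).
Implicit Types (t : R) (x z : 'I_d -> int).

Lemma max_snorm_eps_shift t x z D : (0 < d)%N ->
  (forall i, `|eps * (x i - z i)%:~R| <= D) ->
  Num.max (snorm s0 eps t x) eps <= d%:R * (Num.max (snorm s0 eps t z) eps + D).
Proof.
move=> d_gt0 xz_le; set r := Num.max (snorm s0 eps t z) eps.
have D_ge0 : 0 <= D := le_trans (normr_ge0 _) (xz_le (Ordinal d_gt0)).
have r_ge0 : 0 <= r by rewrite le_max /snorm le_max powR_ge0.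
have d_ge1 : 1 <= (d%:R : R) by rewrite ler1n.
have le_r : forall y, y <= r -> y <= d%:R * (r + D) by move=> y; nra.
rewrite /snorm !ge_max -andbA; apply/and3P; split.
- by apply: le_r; rewrite /r /snorm !le_max lexx.
- apply: le_trans (gridnorm_le_shift xz_le) _; rewrite ler_wpM2l ?ler0n // lerD2r.
  by rewrite /r /snorm !le_max lexx orbT.
- by apply: le_r; rewrite /r le_max lexx orbT.
Qed.

Lemma max_snorm_eps_small_time t x : 0 < s0 -> 0 <= eps -> `|t| <= eps `^ s0 ->
  Num.max (snorm s0 eps t x) eps = Num.max (snorm s0 eps 0 x) eps.
Proof.
move=> s0_gt0 eps_ge0 t_small.
have time_t : `|t| `^ s0^-1 <= eps.
  rewrite -[X in _ <= X](powRr1 eps_ge0) -(mulfV (lt0r_neq0 s0_gt0)) powRrM.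
  by apply: ge0_ler_powR; rewrite // ?invr_ge0 ?nnegrE ?powR_ge0 ?(ltW s0_gt0).
have time_0 : `|0 : R| `^ s0^-1 <= eps.
  by rewrite normr0 powR0 // invr_neq0 // lt0r_neq0.
exact: max_max_small.
Qed.

End ParabolicNorm.

Section LatticePath.
Variable d : nat.
Implicit Types x y z : 'I_d -> int.

Definition shift y (i : 'I_d) : 'I_d -> int := fun j => y j + (j == i)%:Z.

Definition in_box x1 x2 z :=
  forall i, ((x1 i <= z i <= x2 i) || (x2 i <= z i <= x1 i))%R.

Definition l1dist x y : nat := \sum_(i < d) `|x i - y i|%N.

Lemma l1dist0 x y : l1dist x y = 0%N -> x = y.
Proof.
move/eqP; rewrite sum_nat_eq0 => /forallP xy; apply: boolp.funext => i.
by have /implyP/(_ isT) := xy i; lia.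
Qed.

Lemma in_box_left x1 x2 : in_box x1 x2 x1.
Proof. by move=> i; lia. Qed.

Lemma in_box_coord_le x1 x2 z i : in_box x1 x2 z -> (`|x1 i - z i| <= `|x1 i - x2 i|)%R.
Proof. by move/(_ i); lia. Qed.

Lemma in_box_step x1 x2 y i : in_box x1 x2 y -> y i != x2 i ->
  exists2 y', in_box x1 x2 y' &
    (l1dist y' x2).+1 = l1dist y x2 /\ (y' = shift y i \/ y = shift y' i).
Proof.
move=> y_box yi_neq.
pose v := if (y i < x2 i)%R then y i + 1 else y i - 1.
pose y' := fun j => if j == i then v else y j.
have y'_i : y' i = v by rewrite /y' eqxx.
have y'_j : forall j, j != i -> y' j = y j by move=> j /negPf ji; rewrite /y' ji.
exists y'.
  move=> j; have [->|/y'_j ->] := eqVneq j i; last exact: y_box.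
  by rewrite y'_i /v; have := y_box i; case: (ltrP (y i) (x2 i)); lia.
split.
  rewrite /l1dist (bigD1 i) //= [in RHS](bigD1 i) //= y'_i.
  under eq_bigr => j /y'_j -> do [].
  by rewrite /v; case: (ltrP (y i) (x2 i)); lia.
rewrite /shift; case: (ltrP (y i) (x2 i)) => [lt|ge]; [left|right];
  apply: boolp.funext => j; have [->|ji] := eqVneq j i.
- by rewrite y'_i /v lt.
- by rewrite y'_j // addr0.
- by rewrite y'_i /v ltNge ge /= subrK.
- by rewrite y'_j // addr0.
Qed.

Lemma l1dist_xx x : l1dist x x = 0%N.
Proof. by apply: big1 => i _; rewrite subrr. Qed.

Lemma in_box_path_bound (R : numDomainType) (f : ('I_d -> int) -> R) x1 x2 (M : R) :
  (forall z i, in_box x1 x2 z -> in_box x1 x2 (shift z i) ->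
     `|f (shift z i) - f z| <= M) ->
  `|f x1 - f x2| <= (l1dist x1 x2)%:R * M.
Proof.
move=> f_step; suff: forall n y, in_box x1 x2 y -> l1dist y x2 = n ->
    `|f y - f x2| <= n%:R * M by apply; [exact: in_box_left|].
elim=> [|n IHn] y y_box y_dist.
  by rewrite (l1dist0 y_dist) subrr normr0 mul0r.
have /existsP[i yi_neq] : [exists i, y i != x2 i].
  apply: contraT; rewrite negb_exists => /forallP y_eq; move: y_dist.
  suff -> : y = x2 by rewrite l1dist_xx.
  by apply: boolp.funext => i; apply/eqP/negbNE/y_eq.
have [y' y'_box [y'_dist y'_adj]] := in_box_step y_box yi_neq.
have step : `|f y - f y'| <= M.
  case: y'_adj => y'E.
    by rewrite distrC y'E; apply: f_step => //; rewrite -y'E.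
  by rewrite y'E; apply: f_step => //; rewrite -y'E.
have := IHn y' y'_box (succn_inj (etrans y'_dist y_dist)).
move=> /(lerD step); rewrite mulrSr mulrDl mul1r [_ + M]addrC; apply: le_trans.
by rewrite -[f y - _](subrKA (f y')); exact: ler_normD.
Qed.

End LatticePath.

Lemma powR_le_mul_powRB (R : realType) (a b p q : R) :
  0 < a -> a <= b -> 0 <= q -> a `^ p <= a `^ (p - q) * b `^ q.
Proof.
move=> a_gt0 ab q_ge0; rewrite -[in X in X <= _](subrK q p) (@powRD _ a (p - q)); last first.
  by apply/implyP => _; rewrite lt0r_neq0.
have a_ge0 := ltW a_gt0.
by rewrite ler_wpM2l ?powR_ge0 //; apply: ge0_ler_powR; rewrite // nnegrE ?(le_trans a_ge0 ab).
Qed.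

Lemma le_powR_mul_powR1B (R : realType) (a b p : R) :
  0 <= a -> a <= b -> 0 <= p <= 1 -> a <= a `^ p * b `^ (1 - p).
Proof.
move=> a_ge0 ab /andP[p_ge0 p_le1].
have b_ge0 := le_trans a_ge0 ab.
have a_split : a = a `^ p * a `^ (1 - p).
  rewrite -powRD ?subrKC ?powRr1 //.
  by apply/implyP; rewrite oner_eq0.
rewrite {1}a_split ler_wpM2l ?powR_ge0 //.
by apply: ge0_ler_powR; rewrite ?subr_ge0 // nnegrE.
Qed.

Lemma l1dist_le_gridnorm (R : realType) (d : nat) (eps : R) (x1 x2 : 'I_d -> int) :
  0 <= eps -> (l1dist x1 x2)%:R * eps <= d%:R * gridnorm eps (fun i => x1 i - x2 i).
Proof.
move=> eps_ge0; rewrite /l1dist natr_sum mulr_suml.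
apply: (le_trans (y := \sum_(i < d) gridnorm eps (fun i => x1 i - x2 i))); last first.
  by rewrite sumr_const card_ord mulr_natl.
apply: ler_sum => i _; apply: le_trans (gridnorm_coord_le _ _ i).
by rewrite natr_absz intr_norm normrM (ger0_norm eps_ge0) mulrC.
Qed.

(* The last two summands serve the two regimes of [holder_bound]; the [1]
   keeps the constant positive when [d = 0]. *)
Definition holder_const (R : realType) (d : nat) (zeta kappa : R) : R :=
  1 + (2 * d%:R ^+ 2 + 2 * d%:R) `^ kappa + d%:R * (2 * d%:R)^-1 `^ (zeta - 1).

Lemma holder_const_ge1 (R : realType) (d : nat) (zeta kappa : R) :
  1 <= holder_const d zeta kappa.
Proof. by rewrite /holder_const -addrA lerDl addr_ge0 ?mulr_ge0 ?powR_ge0. Qed.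

Section HolderEstimate.
Variables (R : realType) (d : nat) (eps zeta kappa T : R).
Variables (r f : ('I_d -> int) -> R).
Hypotheses (d_gt0 : (0 < d)%N) (eps_gt0 : 0 < eps) (zeta_le0 : zeta <= 0).
Hypotheses (kappa_ge0 : 0 <= kappa) (kappa_le1 : kappa <= 1) (T_ge0 : 0 <= T).
Hypothesis r_ge_eps : forall x, eps <= r x.
Hypothesis r_shift : forall x z (D : R),
  (forall i, `|eps * (x i - z i)%:~R| <= D) -> r x <= d%:R * (r z + D).
Hypothesis f_bound : forall x, `|f x| <= T * r x `^ zeta.
Hypothesis f_step : forall x i,
  `|f (shift x i) - f x| <= eps * (T * r x `^ (zeta - 1)).

Implicit Types x z : 'I_d -> int.

Local Notation dist x1 x2 := (gridnorm eps (fun i => x1 i - x2 i)).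

Lemma r_gt0 x : 0 < r x.
Proof. exact: lt_le_trans eps_gt0 (r_ge_eps x). Qed.

Lemma dist_coord_le x1 x2 i : `|eps * (x1 i - x2 i)%:~R| <= dist x1 x2.
Proof. exact: (gridnorm_coord_le eps (fun i => x1 i - x2 i)). Qed.

Lemma distC_coord_le x1 x2 i : `|eps * (x2 i - x1 i)%:~R| <= dist x1 x2.
Proof. by rewrite -opprB intrN mulrN normrN dist_coord_le. Qed.

Lemma holder_near x1 x2 : r x1 <= 2 * d%:R * dist x1 x2 ->
  `|f x1 - f x2| <= (2 * d%:R ^+ 2 + 2 * d%:R) `^ kappa * dist x1 x2 `^ kappa *
    (r x1 `^ (zeta - kappa) + r x2 `^ (zeta - kappa)) * T.
Proof.
set c := 2 * d%:R ^+ 2 + 2 * d%:R; set δ := dist x1 x2 => r1_le.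
have d_ge1 : 1 <= (d%:R : R) by rewrite ler1n.
have δ_ge0 : 0 <= δ by exact: gridnorm_ge0.
have c_ge0 : 0 <= c by rewrite /c; nra.
have f_le x : r x <= c * δ ->
    `|f x| <= T * (r x `^ (zeta - kappa) * (c `^ kappa * δ `^ kappa)).
  move=> rx_le; have cδ_ge0 : 0 <= c * δ := le_trans (ltW (r_gt0 x)) rx_le.
  apply: le_trans (f_bound x) _; rewrite ler_wpM2l // -powRM //.
  exact: powR_le_mul_powRB (r_gt0 x) rx_le kappa_ge0.
have r1_le' : r x1 <= c * δ by rewrite /c; nra.
have r2_le : r x2 <= c * δ.
  have := r_shift (distC_coord_le x1 x2); rewrite -/δ /c; nra.
apply: le_trans (ler_normB _ _) _; apply: le_trans (lerD (f_le _ r1_le') (f_le _ r2_le)) _.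
by lra.
Qed.

Lemma r_lower_in_box x1 x2 z : 2 * d%:R * dist x1 x2 < r x1 -> in_box x1 x2 z ->
  r x1 / (2 * d%:R) <= r z.
Proof.
set δ := dist x1 x2 => r1_gt z_box.
have dR_gt0 : 0 < (d%:R : R) by rewrite ltr0n.
have : r x1 <= d%:R * (r z + δ).
  apply: r_shift => i; apply: le_trans (dist_coord_le x1 x2 i).
  rewrite !normrM ler_wpM2l // -!intr_norm ler_int; exact: in_box_coord_le.
by rewrite ler_pdivrMr ?mulr_gt0 //; nra.
Qed.

Lemma holder_far x1 x2 : 2 * d%:R * dist x1 x2 < r x1 ->
  `|f x1 - f x2| <= d%:R * (2 * d%:R)^-1 `^ (zeta - 1) * dist x1 x2 `^ kappa *
    r x1 `^ (zeta - kappa) * T.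
Proof.
set δ := dist x1 x2 => r1_gt; set b := r x1 / (2 * d%:R).
have dR_gt0 : 0 < (d%:R : R) by rewrite ltr0n.
have b_gt0 : 0 < b by rewrite divr_gt0 ?mulr_gt0 ?r_gt0.
have steps : `|f x1 - f x2| <= (l1dist x1 x2)%:R * (eps * (T * b `^ (zeta - 1))).
  apply: in_box_path_bound => z i z_box _; apply: le_trans (f_step z i) _.
  apply: ler_wpM2l; first exact: ltW.
  apply: ler_wpM2l => //; apply: le0_ger_powR => //.
  - exact: (r_lower_in_box r1_gt z_box).
  - by rewrite subr_le0 (le_trans zeta_le0).
have r1_gt0 := r_gt0 x1; have δ_ge0 : 0 <= δ by exact: gridnorm_ge0.
have δ_le_r1 : δ <= r x1.
  by apply: ltW; apply: le_lt_trans r1_gt; rewrite ler_peMl // -natrM ler1n muln_gt0.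
have δ_le : δ <= δ `^ kappa * r x1 `^ (1 - kappa).
  by apply: le_powR_mul_powR1B => //; apply/andP.
have bE : b `^ (zeta - 1) = r x1 `^ (zeta - 1) * (2 * d%:R)^-1 `^ (zeta - 1).
  by rewrite powRM ?ltW // invr_gt0 mulr_gt0.
have r1E : r x1 `^ (1 - kappa) * r x1 `^ (zeta - 1) = r x1 `^ (zeta - kappa).
  by rewrite -powRD ?lt0r_neq0 ?implybT //; congr (_ `^ _); ring.
set c := d%:R * (2 * d%:R)^-1 `^ (zeta - 1) * r x1 `^ (zeta - 1) * T.
have c_ge0 : 0 <= c by rewrite !mulr_ge0 ?powR_ge0.
have path_le : (l1dist x1 x2)%:R * (eps * (T * b `^ (zeta - 1))) <= δ * c.
  rewrite mulrA; apply: le_trans (ler_wpM2r _ (l1dist_le_gridnorm _ _ (ltW eps_gt0))) _.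
    by rewrite mulr_ge0 ?powR_ge0.
  by rewrite -/δ bE /c; lra.
apply: le_trans steps _; apply: le_trans path_le _.
apply: le_trans (ler_wpM2r c_ge0 δ_le) _.
by rewrite -r1E /c; lra.
Qed.

Lemma holder_bound x1 x2 : `|f x1 - f x2| <= holder_const d zeta kappa *
  dist x1 x2 `^ kappa * (r x1 `^ (zeta - kappa) + r x2 `^ (zeta - kappa)) * T.
Proof.
set C := holder_const d zeta kappa; set A := dist x1 x2 `^ kappa.
set u1 := r x1 `^ (zeta - kappa); set u2 := r x2 `^ (zeta - kappa).
have [A_ge0 u1_ge0 u2_ge0] : [/\ 0 <= A, 0 <= u1 & 0 <= u2] by split; exact: powR_ge0.
have weaken c u : 0 <= c -> c <= C -> 0 <= u -> u <= u1 + u2 ->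
    c * A * u * T <= C * A * (u1 + u2) * T.
  move=> c_ge0 c_le u_ge0 u_le; apply: ler_wpM2r => //.
  by apply: ler_pM; rewrite ?mulr_ge0 ?ler_wpM2r.
have c1_ge0 : 0 <= (2 * d%:R ^+ 2 + 2 * d%:R) `^ kappa by exact: powR_ge0.
have c2_ge0 : 0 <= d%:R * (2 * d%:R)^-1 `^ (zeta - 1) by rewrite mulr_ge0 ?powR_ge0.
have [r1_le|r1_gt] := lerP (r x1) (2 * d%:R * dist x1 x2).
- apply: le_trans (holder_near r1_le) (weaken _ _ c1_ge0 _ _ _) => //.
  - by move: c2_ge0; rewrite /C /holder_const; lra.
  - exact: addr_ge0.
- apply: le_trans (holder_far r1_gt) (weaken _ _ c2_ge0 _ u1_ge0 _).
  - by move: c1_ge0; rewrite /C /holder_const; lra.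
  - by rewrite lerDl.
Qed.

End HolderEstimate.

Section TimeSlices.
Variables (R : realType) (d : nat) (s0 eps zeta m : R).
Variable K : R -> ('I_d -> int) -> R.
Implicit Types (t : R) (x : 'I_d -> int) (i : 'I_d).

Lemma Dk_zero : Dk eps 0 (fun _ : 'I_d => 0%N) K = K.
Proof. by rewrite /Dk /=; elim: (enum 'I_d) => //= i s ->. Qed.

Lemma Dk_unit i : Dk eps 0 (fun j => nat_of_bool (j == i)) K = Ddiff eps i K.
Proof.
suff foldE : forall s : seq 'I_d, uniq s ->
    foldr (fun j g => iter (j == i) (Ddiff eps j) g) K s =
    if i \in s then Ddiff eps i K else K.
  by rewrite /Dk /= foldE ?enum_uniq // mem_enum.
elim=> //= j s IHs /andP[j_notin s_uniq]; rewrite in_cons IHs //.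
by case: (eqVneq j i) j_notin => [->|//] /negPf ->.
Qed.

Lemma msize_zero : msize s0 0 (fun _ : 'I_d => 0%N) = 0.
Proof. by rewrite /msize big1 // mulr0 addr0. Qed.

Lemma msize_unit i : msize s0 0 (fun j => nat_of_bool (j == i)) = 1.
Proof.
rewrite /msize mulr0 add0r (bigD1 i) //= eqxx big1 ?addr0 //.
by move=> j /negPf ->.
Qed.

Lemma tnorm_ge_ratio k0 kx t x : t != 0 -> msize s0 k0 kx <= m ->
  ((`|Dk eps k0 kx K t x| / Num.max (snorm s0 eps t x) eps
      `^ Num.min (zeta - msize s0 k0 kx) 0)%:E <= tnorm s0 eps zeta m K)%E.
Proof. by move=> t_neq0 k_le; apply: ereal_sup_ubound; exists k0, kx, t, x. Qed.

Lemma tnorm_ge0 : 0 <= m -> (0 <= tnorm s0 eps zeta m K)%E.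
Proof.
move=> m_ge0; apply: le_trans (tnorm_ge_ratio (k0 := 0%N) (kx := fun _ => 0%N) (fun _ => 0)
  (oner_neq0 R) _); first by rewrite lee_fin divr_ge0 ?powR_ge0.
by rewrite msize_zero.
Qed.

Variable T : R.
Hypotheses (eps_gt0 : 0 < eps) (tnormE : tnorm s0 eps zeta m K = T%:E).

Lemma max_snorm_eps_gt0 t x : 0 < Num.max (snorm s0 eps t x) eps.
Proof. by apply: lt_le_trans eps_gt0 _; rewrite le_max lexx orbT. Qed.

Lemma tnorm_value_bound t x : 0 <= m -> zeta <= 0 -> t != 0 ->
  `|K t x| <= T * Num.max (snorm s0 eps t x) eps `^ zeta.
Proof.
move=> m_ge0 zeta_le0 t_neq0.
have := tnorm_ge_ratio (k0 := 0%N) (kx := fun _ => 0%N) x t_neq0.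
rewrite msize_zero m_ge0 Dk_zero subr0 (min_l zeta_le0) tnormE lee_fin => /(_ isT).
by rewrite ler_pdivrMr ?powR_gt0 ?max_snorm_eps_gt0 // mulrC.
Qed.

Lemma tnorm_Ddiff_bound t x i : 1 <= m -> zeta <= 1 -> t != 0 ->
  `|K t (shift x i) - K t x| <= eps * (T * Num.max (snorm s0 eps t x) eps `^ (zeta - 1)).
Proof.
move=> m_ge1 zeta_le1 t_neq0.
have := tnorm_ge_ratio (k0 := 0%N) (kx := fun j => nat_of_bool (j == i)) x t_neq0.
rewrite msize_unit m_ge1 Dk_unit tnormE lee_fin => /(_ isT).
rewrite (min_l (_ : zeta - 1 <= 0)) ?subr_le0 //.
rewrite ler_pdivrMr ?powR_gt0 ?max_snorm_eps_gt0 // /Ddiff normrM.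
rewrite ger0_norm ?invr_ge0 ?(ltW eps_gt0) // => ratio_le.
by rewrite -[X in X <= _](mulVKf (lt0r_neq0 eps_gt0)) ler_wpM2l ?(ltW eps_gt0) // mulrC.
Qed.

End TimeSlices.

Lemma grid0_eq (x y : 'I_0 -> int) : x = y.
Proof. by apply: boolp.funext => -[]. Qed.

Lemma holder_bound_slice (R : realType) (d : nat) (s0 eps zeta kappa T t : R)
    (K : R -> ('I_d -> int) -> R) (x1 x2 : 'I_d -> int) :
  0 < eps -> zeta <= 0 -> 0 <= kappa <= 1 ->
  tnorm s0 eps zeta 1 K = T%:E -> t != 0 ->
  `|K t x1 - K t x2| <= holder_const d zeta kappa *
    gridnorm eps (fun i => x1 i - x2 i) `^ kappa *
    (Num.max (snorm s0 eps t x1) eps `^ (zeta - kappa) +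
     Num.max (snorm s0 eps t x2) eps `^ (zeta - kappa)) * T.
Proof.
move=> eps_gt0 zeta_le0 /andP[kappa_ge0 kappa_le1] tnormE t_neq0.
have T_ge0 : 0 <= T by rewrite -lee_fin -tnormE tnorm_ge0.
case: d K x1 x2 tnormE => [|d] K x1 x2 tnormE.
  by rewrite (grid0_eq x2 x1) subrr normr0 !mulr_ge0 ?addr_ge0 ?powR_ge0 // ltW ?holder_const_ge1.
apply: (holder_bound (r := fun x => Num.max (snorm s0 eps t x) eps)) => //.
- by move=> x; rewrite le_max lexx orbT.
- by move=> x z D; apply: max_snorm_eps_shift.
- by move=> x; apply: (tnorm_value_bound eps_gt0 tnormE).
- by move=> x i; apply: (tnorm_Ddiff_bound eps_gt0 tnormE); rewrite // (le_trans zeta_le0).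
Qed.

Lemma le_at0_of_one_sided_cvg (R : realType) (g : R -> R) (B e : R) : 0 < e ->
  (forall t, t != 0 -> `|t| <= e -> g t <= B) ->
  g t @[t --> 0^'+] --> g 0 \/ g t @[t --> 0^'-] --> g 0 -> g 0 <= B.
Proof.
move=> e_gt0 g_le [g_cvg|g_cvg]; apply: (cvgr_to_le g_cvg); near=> t; apply: g_le.
- by near: t; exact: nbhs_right_neq.
- have t_gt0 : 0 < t by near: t; exact: nbhs_right_gt.
  by rewrite gtr0_norm //; apply: ltW; near: t; exact: nbhs_right_lt.
- by near: t; exact: nbhs_left_neq.
- have t_lt0 : t < 0 by near: t; exact: nbhs_left_lt.
  rewrite ltr0_norm // lerNl; apply: ltW; near: t; apply: nbhs_left_gt.
  by rewrite oppr_lt0.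
Unshelve. all: by end_near.
Qed.

Lemma of_order_tnormE (R : realType) (d : nat) (s0 zeta m : R)
    (K : nat -> R -> ('I_d -> int) -> R) (N : nat) :
  0 <= m -> of_order s0 zeta m K ->
  tnorm s0 (epsN N) zeta m (K N) = (fine (tnorm s0 (epsN N) zeta m (K N)))%:E.
Proof.
move=> m_ge0 [M K_le]; rewrite fineK // ge0_fin_numE ?tnorm_ge0 //.
exact: le_lt_trans (K_le N) (ltey _).
Qed.

Theorem lemma7p4 (R : realType) (d : nat) (s0 zeta kappa : R) :
  1 <= s0 -> zeta <= 0 -> 0 <= kappa <= 1 ->
  exists C : R, 0 < C /\
  forall K : nat -> R -> ('I_d -> int) -> R,
    (forall N, admissible s0 (epsN N) (K N)) ->
    of_order s0 zeta 1 K ->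
    forall (N : nat) (t : R) (x1 x2 : 'I_d -> int),
      ((`|K N t x1 - K N t x2|)%:E <=
      (C * (gridnorm (epsN N) (fun i => x1 i - x2 i)) `^ kappa *
         ((Num.max (snorm s0 (epsN N) t x1) (epsN N)) `^ (zeta - kappa) +
          (Num.max (snorm s0 (epsN N) t x2) (epsN N)) `^ (zeta - kappa)))%:E
      * tnorm s0 (epsN N) zeta 1 (K N))%E.
Proof.
move=> s0_ge1 zeta_le0 kappa01; exists (holder_const d zeta kappa).
split=> [|K K_adm K_order N t x1 x2]; first exact: lt_le_trans ltr01 (holder_const_ge1 _ _ _).
have eps_gt0 : 0 < epsN N :> R by rewrite invr_gt0 exprn_gt0 // ltr0n.
rewrite (of_order_tnormE N ler01 K_order) -EFinM lee_fin.
have slice := holder_bound_slice x1 x2 eps_gt0 zeta_le0 kappa01 (of_order_tnormE N ler01 K_order).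
have [->|t_neq0] := eqVneq t 0; last exact: slice.
have s0_gt0 : 0 < s0 := lt_le_trans ltr01 s0_ge1.
apply: (le_at0_of_one_sided_cvg (g := fun t => `|K N t x1 - K N t x2|) (powR_gt0 s0 eps_gt0)).
  move=> t' t'_neq0 t'_small.
  by rewrite -!(max_snorm_eps_small_time _ s0_gt0 (ltW eps_gt0) t'_small); exact: slice.
by case: (K_adm N) => _ _ [K_cvg|K_cvg]; [left|right]; apply: cvg_norm; exact: cvgB.
Qed.
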